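(* For every non-empty index $\mathbf k$, \[\zeta^{s,t,\star}_{\widehat{\mathcal{RS}}}(\mathbf k)=\frac{1}{2\pi i}\Bigl\langle\Phi_{\mathcal{RS}}(X_\infty,X_1),\ (1-e_0s)^{-1}(e_1-e_0)\,\omega(\mathbf k)\,(e_1-e_0)(1-e_0t)^{-1}\Bigr\rangle,\] where $X_\infty=-X_0-X_1$.
   Context: $s,t$ commuting indeterminates, $X_0,X_1$ noncommuting variables. An index is a finite tuple $\mathbf{k}=(k_1,\dots,k_r)$ of positive integers, $\mathrm{dep}(\mathbf k)=r$, $\mathrm{wt}(\mathbf k)=\sum k_i$. $\mathfrak H=\mathbb Q\langle e_0,e_1\rangle$, $e_{\mathbf{k}}=e_1e_0^{k_1-1}\cdots e_1e_0^{k_r-1}$; for non-empty $\mathbf k$, $\omega(\mathbf k)$ is defined by $e_1\omega(\mathbf k)=e_{\mathbf k}$. $Z^{ш}:(\mathfrak H,ш)\to\mathbb R$ is the shuffle-algebra homomorphism with $Z^{ш}(e_{\mathbf k})=(-1)^{\mathrm{dep}}\zeta(\mathbf k)$ for admissible $\mathbf k$ (empty or $k_r\ge2$) and $Z^{ш}(e_0)=Z^{ш}(e_1)=0$. $\Phi_{\mathrm{KZ}}(X_0,X_1)=\sum_{n\ge0}\sum_{a_i\in\{0,1\}}Z^{ш}(e_{a_1}\cdots e_{a_n})X_{a_n}\cdots X_{a_1}$; $\Phi_{\mathcal{RS}}(X_0,X_1)=\exp(\pi iX_0/2)\Phi_{\mathrm{KZ}}(X_1,X_0)\exp(2\pi iX_1)\Phi_{\mathrm{KZ}}(X_0,X_1)\exp(\pi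 iX_0/2)$, and $\Phi_{\mathcal{RS}}(A,B)$ denotes substitution $X_0\mapsto A,X_1\mapsto B$. Pairing: for $\Phi=\sum_Wc_WW$ over words $W$ in $X_0,X_1$, $\langle\Phi,e_{a_1}\cdots e_{a_n}\rangle=c_{X_{a_1}\cdots X_{a_n}}$, extended linearly and coefficientwise to $\mathfrak H[[s,t]]$. For non-empty $\mathbf k$, $\zeta^{s,t}_{\widehat{\mathcal{RS}}}(\mathbf k)=\frac{(-1)^{\mathrm{wt}(\mathbf k)+\mathrm{dep}(\mathbf k)}}{2\pi i}\langle\Phi_{\mathcal{RS}}(X_0,X_1),(1+e_0s)^{-1}e_1\omega(\mathbf k)e_1(1+e_0t)^{-1}\rangle$. $\mathbf l\preceq\mathbf k$ means $\mathbf l$ is obtained from $(k_1\circ\cdots\circ k_r)$ by replacing each $\circ$ by a comma or a plus sign, and $\zeta^{s,t,\star}_{\widehat{\mathcal{RS}}}(\mathbf k)=\sum_{\mathbf l\preceq\mathbf k}\zeta^{s,t}_{\widehat{\mathcal{RS}}}(\mathbf l)$. *)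

From HB Require Import structures.
From mathcomp Require Import all_boot all_order all_algebra.
From mathcomp Require Import reals topology normedtype sequences trigo.
From mathcomp.real_closed Require Import complex.

Set Implicit Arguments.
Unset Strict Implicit.
Unset Printing Implicit Defensive.

Import Order.TTheory GRing.Theory Num.Theory.
Import numFieldTopology.Exports numFieldNormedType.Exports.
Local Open Scope ring_scope.

(* Words in the letters e_0 (= false) and e_1 (= true).  The same type is
   used for words in X_0 (= false), X_1 (= true).                          *)
Definition word := seq bool.
Definition l0 : bool := false.
Definition l1 : bool := true.

Definition is_index (k : seq nat) : bool := all (fun x => 0 < x)%N k.
Definition wt (k : seq nat) : nat := sumn k.
Definition dep (k : seq nat) : nat := size k.
Definition admissible (k : seq nat) : bool :=
  (k == [::]) || (1 < last 0%N k)%N.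

(* e_k = e_1 e_0^{k_1-1} ... e_1 e_0^{k_r-1} *)
Definition e_idx (k : seq nat) : word :=
  flatten [seq l1 :: nseq ki.-1 l0 | ki <- k].
(* omega(k), defined by e_1 omega(k) = e_k for non-empty k *)
Definition omega (k : seq nat) : word := behead (e_idx k).

(* The indices l with l \preceq k: replace each "o" in (k_1 o ... o k_r)
   by a comma or a plus sign (list of all 2^(r-1) choices). *)
Fixpoint comps (a : nat) (rest : seq nat) : seq (seq nat) :=
  match rest with
  | [::] => [:: [:: a]]
  | b :: r => [seq a :: l | l <- comps b r] ++ comps (a + b)%N r
  end.
Definition preceq_list (k : seq nat) : seq (seq nat) :=
  if k is a :: r then comps a r else [:: [::]].

(* Shuffle product of two words, as a list (multiset) of words. *)
Fixpoint shuffle (u v : word) : seq word :=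
  let fix sh_aux (v : word) : seq word :=
    match u, v with
    | [::], _ => [:: v]
    | _, [::] => [:: u]
    | a :: u', b :: v' =>
        [seq a :: w | w <- shuffle u' v] ++ [seq b :: w | w <- sh_aux v']
    end in
  sh_aux v.

Section MZV.
Variable R : realType.

(* Truncated multiple zeta sum:
   mzv_trunc k m N = sum_{m < n_1 < ... < n_r < N} 1/(n_1^{k_1} ... n_r^{k_r}) *)
Fixpoint mzv_trunc (k : seq nat) (m N : nat) : R :=
  match k with
  | [::] => 1
  | k1 :: k' =>
      \sum_(m.+1 <= n < N) ((n%:R ^+ k1)^-1 * mzv_trunc k' n N)
  end.

Definition mzv (k : seq nat) : R := limn (fun N => mzv_trunc k 0 N).

(* Z : words -> R (extended linearly to H) is the shuffle-regularized
   MZV map Z^sh: a unital shuffle-algebra homomorphism with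
   Z(e_k) = (-1)^dep zeta(k) for admissible k and Z(e0) = Z(e1) = 0.
   (These properties determine Z uniquely.) *)
Definition is_Zsh (Z : word -> R) : Prop :=
  [/\ forall u v : word, Z u * Z v = \sum_(w <- shuffle u v) Z w,
      forall k : seq nat, is_index k -> admissible k ->
        Z (e_idx k) = (-1) ^+ dep k * mzv k,
      Z [:: l0] = 0 & Z [:: l1] = 0].

Local Open Scope complex_scope.
Local Notation C := R[i].

(* Formal noncommutative series in X0, X1 with complex coefficients,
   represented by their coefficient function on words. *)
Definition series := word -> C.

Definition smul (f g : series) : series :=
  fun W => \sum_(j < (size W).+1) f (take j W) * g (drop j W).

Definition sexp (c : C) (a : bool) : series :=
  fun W => if W == nseq (size W) a then c ^+ size W / ((size W)`!)%:R else 0.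

(* Phi_KZ(X0,X1) = sum Z(e_{a1}..e_{an}) X_{an}..X_{a1} *)
Definition PhiKZ (Z : word -> R) : series := fun W => (Z (rev W))%:C.
(* Phi_KZ(X1,X0) *)
Definition PhiKZswap (Z : word -> R) : series :=
  fun W => (Z (rev (map negb W)))%:C.

Definition ipi : C := (pi%:C) * 'i.

Definition PhiRS (Z : word -> R) : series :=
  smul (sexp (ipi / 2%:R) l0)
    (smul (PhiKZswap Z)
      (smul (sexp (2%:R * ipi) l1)
        (smul (PhiKZ Z) (sexp (ipi / 2%:R) l0)))).

(* Substitution X_a |-> sum_b img a b X_b (homogeneous of degree one):
   coefficient of W in Phi(img X0, img X1). *)
Definition ssubst (img : bool -> bool -> C) (f : series) : series :=
  fun W => \sum_(V : (size W).-tuple bool)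
             f V * \prod_(i < size W) img (tnth V i) (nth l0 W i).

(* X_infty = -X0 - X1 substituted for X0, X1 kept. *)
Definition img_inf (a b : bool) : C :=
  if a == l0 then -1 else (if b == l1 then 1 else 0).

(* Elements of H (noncommutative polynomials in e0,e1) as formal linear
   combinations of words. *)
Definition hpoly := seq (C * word).
Definition hmul (p q : hpoly) : hpoly :=
  [seq (x.1 * y.1, x.2 ++ y.2) | x <- p, y <- q].
Definition hword (w : word) : hpoly := [:: (1, w)].
Definition e1_minus_e0 : hpoly := [:: (1, [:: l1]); (-1, [:: l0])].
(* coefficient of s^m in (1 - c e0 s)^{-1} *)
Definition geom (c : C) (m : nat) : hpoly := [:: (c ^+ m, nseq m l0)].

Definition pairing (f : series) (p : hpoly) : C :=
  \sum_(x <- p) x.1 * f x.2.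

(* Power series in s, t with complex coefficients: coefficient functions.
   zeta^{s,t}_RS(k) : coefficient of s^m t^n. *)
Definition zetaRS (Z : word -> R) (k : seq nat) (m n : nat) : C :=
  (-1) ^+ (wt k + dep k) / (2%:R * ipi) *
  pairing (PhiRS Z)
    (hmul (hmul (geom (-1) m) (hword (l1 :: omega k ++ [:: l1]))) (geom (-1) n)).

Definition zetaRS_star (Z : word -> R) (k : seq nat) (m n : nat) : C :=
  \sum_(l <- preceq_list k) zetaRS Z l m n.

(* coefficient of s^m t^n of the right-hand side *)
Definition rhs_prop54 (Z : word -> R) (k : seq nat) (m n : nat) : C :=
  (2%:R * ipi)^-1 *
  pairing (ssubst img_inf (PhiRS Z))
    (hmul (hmul (hmul (hmul (geom 1 m) e1_minus_e0) (hword (omega k)))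
                e1_minus_e0) (geom 1 n)).

End MZV.

(** Substituting [X_oo = -X_0 - X_1] for [X_0] is dual, letter by letter, to
    [e_0 |-> -e_0] and [e_1 |-> e_1 - e_0].  Hence pairing [Phi(X_oo, X_1)]
    with a word [u (e_1 - e_0) v] amounts to pairing [Phi] with [u e_1 v]
    transformed letterwise, and the image of [omega(k) = e_0^(k_1-1) e_1 ...]
    expands, choosing [e_1] or [-e_0] at each inner [e_1 - e_0], into the
    signed sum of [omega(l)] over [l \preceq k].  The identity is formal:
    it holds for any coefficients. *)
From HB Require Import structures.
From mathcomp Require Import all_boot all_order all_algebra.
From mathcomp Require Import reals topology normedtype sequences trigo.
From mathcomp.real_closed Require Import complex.
From mathcomp Require Import ring zify.

Set Implicit Arguments.
Unset Strict Implicit.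
Unset Printing Implicit Defensive.

Import Order.TTheory GRing.Theory Num.Theory.
Local Open Scope ring_scope.

Lemma big_tuple0 (T : finType) (V : nmodType) (F : 0.-tuple T -> V) :
  \sum_(t : 0.-tuple T) F t = F [tuple].
Proof. by rewrite (big_pred1 [tuple]) // => t; rewrite [t]tuple0; exact/esym/eqP. Qed.

Lemma big_tuple_cons (T : finType) (V : nmodType) n (F : n.+1.-tuple T -> V) :
  \sum_(t : n.+1.-tuple T) F t =
  \sum_(a : T) \sum_(t : n.-tuple T) F [tuple of a :: t].
Proof.
rewrite pair_big /= (reindex (fun p : T * n.-tuple T => [tuple of p.1 :: p.2])) //.
exists (fun t => (thead t, [tuple of behead t])) => [[a t] _ | t _] /=.
  by rewrite theadE; congr pair; apply: val_inj.
by rewrite -tuple_eta.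
Qed.

Lemma omega_cons a l : omega (a :: l) = nseq a.-1 l0 ++ e_idx l.
Proof. by []. Qed.

Lemma e_idx_omega l : l != [::] -> e_idx l = l1 :: omega l.
Proof. by case: l. Qed.

Lemma comps_neq0 r a l : l \in comps a r -> l != [::].
Proof.
elim: r a => [|b r IHr] a /=; first by rewrite inE => /eqP ->.
by rewrite mem_cat => /orP[/mapP[l' _ ->] // | /IHr].
Qed.

Section Substitution.

Variable R : realType.
Local Notation C := (complex R).

Section GeneralSubstitution.

Variable img : bool -> bool -> C.

Lemma ssubst_nil (F : word -> C) : ssubst img F [::] = F [::].
Proof. by rewrite /ssubst big_tuple0 big_ord0 mulr1. Qed.

Lemma ssubst_cons (F : word -> C) b W :
  ssubst img F (b :: W) =
  \sum_(a : bool) img a b * ssubst img (fun V => F (a :: V)) W.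
Proof.
rewrite /ssubst /= big_tuple_cons; apply: eq_bigr => a _.
rewrite mulr_sumr; apply: eq_bigr => t _.
rewrite big_ord_recl tnth0 /=.
under eq_bigr => i _ do rewrite tnthS.
by rewrite mulrCA.
Qed.

Lemma eq_ssubst (F G : word -> C) W :
  F =1 G -> ssubst img F W = ssubst img G W.
Proof. by move=> eqFG; apply: eq_bigr => t _; rewrite eqFG. Qed.

Lemma ssubstZ (c : C) (F : word -> C) W :
  ssubst img (fun V => c * F V) W = c * ssubst img F W.
Proof. by rewrite /ssubst mulr_sumr; apply: eq_bigr => t _; rewrite mulrA. Qed.

Lemma ssubstB (F G : word -> C) W :
  ssubst img (fun V => F V - G V) W = ssubst img F W - ssubst img G W.
Proof.
by rewrite /ssubst -sumrB; apply: eq_bigr => t _; rewrite mulrBl.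
Qed.

Lemma ssubst_cat (F : word -> C) u v :
  ssubst img F (u ++ v) =
  ssubst img (fun U => ssubst img (fun V => F (U ++ V)) v) u.
Proof.
elim: u F => [|b u IHu] F /=; first by rewrite ssubst_nil.
by rewrite !ssubst_cons; apply: eq_bigr => a _; rewrite IHu.
Qed.

End GeneralSubstitution.

Lemma pairing_geom_word (f : word -> C) c m n w :
  pairing f (hmul (hmul (geom c m) (hword R w)) (geom c n)) =
  c ^+ (m + n) * f (nseq m l0 ++ w ++ nseq n l0).
Proof.
by rewrite /pairing /hmul /= !big_seq1 /= mulr1 -exprD catA.
Qed.

Lemma pairing_geom_frame (f : word -> C) c m n w :
  pairing f (hmul (hmul (hmul (hmul (geom c m) (e1_minus_e0 R)) (hword R w))
                        (e1_minus_e0 R)) (geom c n)) =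
  c ^+ (m + n) *
  (f (nseq m l0 ++ l1 :: w ++ l1 :: nseq n l0)
   - f (nseq m l0 ++ l1 :: w ++ l0 :: nseq n l0)
   - f (nseq m l0 ++ l0 :: w ++ l1 :: nseq n l0)
   + f (nseq m l0 ++ l0 :: w ++ l0 :: nseq n l0)).
Proof.
rewrite /pairing /hmul /e1_minus_e0 /= !big_cons big_nil /= -!catA /=.
rewrite exprD; ring.
Qed.

Local Notation ssubst_inf := (ssubst (@img_inf R)).

Lemma ssubst_inf_cons0 (F : word -> C) W :
  ssubst_inf F (l0 :: W) = - ssubst_inf (fun V => F (l0 :: V)) W.
Proof. by rewrite ssubst_cons big_bool /img_inf /= mul0r add0r mulN1r. Qed.

Lemma ssubst_inf_cons1 (F : word -> C) W :
  ssubst_inf F (l1 :: W) =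
  ssubst_inf (fun V => F (l1 :: V)) W - ssubst_inf (fun V => F (l0 :: V)) W.
Proof. by rewrite ssubst_cons big_bool /img_inf /= mul1r mulN1r. Qed.

Lemma ssubst_inf_nseq0_cat (F : word -> C) m W :
  ssubst_inf F (nseq m l0 ++ W) =
  (-1) ^+ m * ssubst_inf (fun V => F (nseq m l0 ++ V)) W.
Proof.
elim: m F => [|m IHm] F /=; first by rewrite mul1r.
by rewrite ssubst_inf_cons0 IHm exprS mulN1r mulNr.
Qed.

Lemma ssubst_inf_nseq0 (F : word -> C) m :
  ssubst_inf F (nseq m l0) = (-1) ^+ m * F (nseq m l0).
Proof. by have := ssubst_inf_nseq0_cat F m [::]; rewrite cats0 ssubst_nil cats0. Qed.

(* [e_1 - e_0] pairs with [Phi(X_oo, X_1)] as [e_1] does with [Phi]. *)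
Lemma ssubst_inf_e1_minus_e0 (F : word -> C) u v :
  ssubst_inf F (u ++ l1 :: v) - ssubst_inf F (u ++ l0 :: v) =
  ssubst_inf (fun U => ssubst_inf (fun V => F (U ++ l1 :: V)) v) u.
Proof.
rewrite !ssubst_cat -ssubstB; apply: eq_ssubst => U.
by rewrite ssubst_inf_cons1 ssubst_inf_cons0 opprK subrK.
Qed.

Lemma ssubst_inf_frame (F : word -> C) m n w :
  ssubst_inf F (nseq m l0 ++ l1 :: w ++ l1 :: nseq n l0)
  - ssubst_inf F (nseq m l0 ++ l1 :: w ++ l0 :: nseq n l0)
  - ssubst_inf F (nseq m l0 ++ l0 :: w ++ l1 :: nseq n l0)
  + ssubst_inf F (nseq m l0 ++ l0 :: w ++ l0 :: nseq n l0)
  = (-1) ^+ (m + n) *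
    ssubst_inf (fun U => F (nseq m l0 ++ l1 :: U ++ l1 :: nseq n l0)) w.
Proof.
have outer_diff b : ssubst_inf F (nseq m l0 ++ l1 :: w ++ b :: nseq n l0)
               - ssubst_inf F (nseq m l0 ++ l0 :: w ++ b :: nseq n l0) =
  (-1) ^+ m * ssubst_inf (fun V => F (nseq m l0 ++ l1 :: V)) (w ++ b :: nseq n l0).
  by rewrite ssubst_inf_e1_minus_e0 ssubst_inf_nseq0.
have regroup (x y z t : C) : x - y - z + t = (x - z) - (y - t) by ring.
rewrite regroup !outer_diff -mulrBr ssubst_inf_e1_minus_e0.
under eq_ssubst => U do rewrite ssubst_inf_nseq0.
by rewrite ssubstZ exprD mulrA.
Qed.

Lemma ssubst_inf_omega (G : word -> C) a r : (0 < a)%N -> is_index r ->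
  ssubst_inf G (omega (a :: r)) =
  \sum_(l <- comps a r) (-1) ^+ (wt l + dep l) * G (omega l).
Proof.
elim: r a G => [|b r IHr] a G a_gt0 /=.
  case: a a_gt0 => // a _ _.
  rewrite omega_cons cats0 ssubst_inf_nseq0 big_seq1 omega_cons cats0.
  by rewrite /wt /dep /= addn0 addn1 !exprS mulrA mulN1r opprK mul1r.
case/andP=> b_gt0 r_idx.
have omega_split : omega (a :: b :: r) = nseq a.-1 l0 ++ l1 :: omega (b :: r) by [].
have omega_merge : omega (a + b :: r) = nseq a.-1 l0 ++ l0 :: omega (b :: r).
  rewrite !omega_cons.
  have -> : (a + b).-1 = (a.-1 + b.-1.+1)%N by lia.
  by rewrite nseqD -catA.
have merged := IHr (a + b)%N G (ltn_addr b a_gt0) r_idx.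
rewrite omega_merge ssubst_inf_nseq0_cat ssubst_inf_cons0 in merged.
rewrite omega_split ssubst_inf_nseq0_cat ssubst_inf_cons1 mulrBr -mulrN merged.
rewrite (IHr b) // big_cat big_map mulr_sumr; congr (_ + _).
rewrite !big_seq; apply: eq_bigr => l /comps_neq0 l_neq0.
rewrite omega_cons (e_idx_omega l_neq0) /wt /dep /=.
have -> : (a + sumn l + (size l).+1 = (a.-1 + (sumn l + size l)).+2)%N by lia.
by rewrite !exprS !mulN1r opprK (exprD _ a.-1) mulrA.
Qed.

End Substitution.

Theorem proposition5p4 (R : realType) (Z : word -> R) :
  is_Zsh Z ->
  forall k : seq nat, is_index k -> k <> [::] ->
  forall m n : nat, zetaRS_star Z k m n = rhs_prop54 Z k m n.
Proof.
move=> _ [//|a r] /andP[a_gt0 r_idx] _ m n.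
rewrite /zetaRS_star /rhs_prop54 /= pairing_geom_frame expr1n mul1r.
rewrite ssubst_inf_frame ssubst_inf_omega // !mulr_sumr.
apply: eq_bigr => l _.
rewrite /zetaRS pairing_geom_word cat_cons -catA.
ring.
Qed.
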